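(* (i) Let $\epsilon>0$ and $J_u\in\mathbb{R}^{|\mathcal{X}|}$ with $\sum_xJ_u(x)=0$ and $\sum_x|J_u(x)|\le1$. Then every vector in $\mathbb{S}_u=\{y\in\mathbb{R}^{|\mathcal{Y}|}: My=MP_Y+\epsilon M\begin{bmatrix}P_{X|Y_1}^{-1}J_u\\0\end{bmatrix},\ y\ge0\}$ is a probability vector (nonnegative entries summing to one). (ii) Let $(U,Y)$ be a pair of random variables, $U$ on a finite alphabet $\mathcal{U}$, with $Y$-marginal $P_Y$, and let $\{J_u\}_{u\in\mathcal{U}}$ satisfy (P1), (P2), (P3) and $P_{Y|U=u}\in\mathbb{S}_u$ for all $u\in\mathcal{U}$. Define $X$ through $P_{XYU}(x,y,u)=P_{X|Y}(x|y)P_{YU}(y,u)$, so that $X-Y-U$ is a Markov chain. Then $P_{X|U=u}-P_X=\epsilon J_u$ for all $u$.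
   Context: Setting: $X,Y$ on finite alphabets with $|\mathcal{X}|<|\mathcal{Y}|$, joint pmf $P_{XY}$, marginal vectors $P_X,P_Y$ with positive entries. $P_{X|Y}\in\mathbb{R}^{|\mathcal{X}|\times|\mathcal{Y}|}$ (columns are the distributions $P_{X|Y=y}$) has full row rank and $P_{X|Y}=[P_{X|Y_1},P_{X|Y_2}]$ with $P_{X|Y_1}$ (first $|\mathcal{X}|$ columns) invertible. With an SVD $P_{X|Y}=U\Sigma V^T$, $V=[v_1,\dots,v_{|\mathcal{Y}|}]$, set $M=[v_1,\dots,v_{|\mathcal{X}|}]^T$. The zero block has size $|\mathcal{Y}|-|\mathcal{X}|$. Properties: (P1) $\sum_x J_u(x)=0$ for all $u$; (P2) $\sum_u P_U(u)J_u(x)=0$ for all $x$; (P3) $\sum_x|J_u(x)|\le1$ for all $u$. *)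

(* Alphabets: X = 'I_n, Y = 'I_(n+k) with k > 0, U a finType. *)
From mathcomp Require Import all_boot all_order all_algebra.
Set Implicit Arguments. Unset Strict Implicit. Unset Printing Implicit Defensive.
Import Order.TTheory GRing.Theory Num.Theory.
Local Open Scope ring_scope.

Section Defs.
Variable R : realFieldType.

(* joint pmf P_{XY} given as an n x m matrix (rows x, columns y) *)
Definition is_pmf_mx n m (P : 'M[R]_(n, m)) : Prop :=
  (forall i j, 0 <= P i j) /\ \sum_i \sum_j P i j = 1.

Definition margY n m (P : 'M[R]_(n, m)) : 'cV[R]_m := \col_j \sum_i P i j.
Definition margX n m (P : 'M[R]_(n, m)) : 'cV[R]_n := \col_i \sum_j P i j.

(* P_{X|Y}: columns are the distributions P_{X|Y=y} *)
Definition condXY n m (P : 'M[R]_(n, m)) : 'M[R]_(n, m) :=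
  \matrix_(i, j) (P i j / margY P j 0).

Definition is_prob_vec m (y : 'cV[R]_m) : Prop :=
  (forall i, 0 <= y i 0) /\ \sum_i y i 0 = 1.

Definition is_svd n k (P : 'M[R]_(n, n + k)) (U : 'M[R]_n)
    (S : 'M[R]_(n, n + k)) (V : 'M[R]_(n + k)) : Prop :=
  [/\ P = U *m S *m V^T, U^T *m U = 1%:M & V^T *m V = 1%:M] /\
  [/\ (forall (i : 'I_n) (j : 'I_(n + k)), (i : nat) != (j : nat) -> S i j = 0),
      (forall i : 'I_n, 0 <= S i (lshift k i)) &
      (forall i j : 'I_n, (i <= j)%N -> S j (lshift k j) <= S i (lshift k i))].

Definition Mof n k (V : 'M[R]_(n + k)) : 'M[R]_(n, n + k) := (lsubmx V)^T.

Definition in_Su n k (M : 'M[R]_(n, n + k)) (P1 : 'M[R]_n) (PY : 'cV[R]_(n + k))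
    (eps : R) (J : 'cV[R]_n) (y : 'cV[R]_(n + k)) : Prop :=
  M *m y = M *m PY + eps *: (M *m col_mx (invmx P1 *m J) (0 : 'cV[R]_k))
  /\ (forall i, 0 <= y i 0).

Definition PU m (T : finType) (PYU : 'I_m -> T -> R) (u : T) : R :=
  \sum_y PYU y u.
Definition condYU m (T : finType) (PYU : 'I_m -> T -> R) (u : T) : 'cV[R]_m :=
  \col_y (PYU y u / PU PYU u).
Definition PXYU n m (T : finType) (PXgY : 'M[R]_(n, m)) (PYU : 'I_m -> T -> R)
    (x : 'I_n) (y : 'I_m) (u : T) : R := PXgY x y * PYU y u.
Definition condXU n m (T : finType) (PXgY : 'M[R]_(n, m)) (PYU : 'I_m -> T -> R)
    (u : T) : 'cV[R]_n :=
  \col_x ((\sum_y PXYU PXgY PYU x y u) / PU PYU u).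
End Defs.

(* An SVD whose middle factor is rectangular diagonal gives
   P_{X|Y} = (U Sigma_1) M, so the constraint M y = M z defining S_u forces
   P_{X|Y} y = P_{X|Y} z.  For y in S_u this reads
   P_{X|Y} y = P_{X|Y} P_Y + eps P_{X|Y_1} P_{X|Y_1}^-1 J_u = P_X + eps J_u.
   Since P_{X|Y} is column stochastic, the entries of y sum to those of
   P_X + eps J_u, i.e. to 1; and P_{X|U=u} = P_{X|Y} P_{Y|U=u} by the Markov
   chain X - Y - U. *)
From mathcomp Require Import all_boot all_order all_algebra.
Import Order.TTheory GRing.Theory Num.Theory.
Local Open Scope ring_scope.

Section SVD.
Context {R : realFieldType} {n k : nat} {P : 'M[R]_(n, n + k)}.
Context {U0 : 'M[R]_n} {S : 'M[R]_(n, n + k)} {V : 'M[R]_(n + k)}.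
Hypothesis svdP : is_svd P U0 S V.

Lemma is_svd_factor_Mof : P = (U0 *m lsubmx S) *m Mof V.
Proof.
case: svdP => [[-> _ _] [S_diag _ _]].
have S_r0 : rsubmx S = 0.
  apply/matrixP => i j; rewrite !mxE S_diag //=.
  by apply: contraTneq (ltn_ord i) => ->; rewrite -leqNgt leq_addr.
rewrite -{1}(hsubmxK S) S_r0 -{1}(vsubmxK V^T) -mulmxA mul_row_col mul0mx.
by rewrite addr0 /Mof trmx_lsub mulmxA.
Qed.

Lemma is_svd_mulmx_eq (y z : 'cV[R]_(n + k)) :
  Mof V *m y = Mof V *m z -> P *m y = P *m z.
Proof. by rewrite is_svd_factor_Mof -!mulmxA => ->. Qed.

End SVD.

Lemma mul_lsub_col_invmx (R : comUnitRingType) n k (P : 'M[R]_(n, n + k))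
    (J : 'cV[R]_n) :
  lsubmx P \in unitmx -> P *m col_mx (invmx (lsubmx P) *m J) 0 = J.
Proof.
move=> P1_unit.
by rewrite -{1}(hsubmxK P) mul_row_col mulmx0 addr0 mulmxA mulmxV ?mul1mx.
Qed.

Lemma sum_mulmx_col {R : comPzRingType} {n m : nat} {P : 'M[R]_(n, m)}
    (y : 'cV[R]_m) :
  (forall j, \sum_i P i j = 1) -> \sum_i (P *m y) i 0 = \sum_j y j 0.
Proof.
move=> P_stoch; under eq_bigr do rewrite mxE.
rewrite exchange_big; apply: eq_bigr => j _.
by rewrite -mulr_suml P_stoch mul1r.
Qed.

Section Marginals.
Context {R : realFieldType} {n m : nat} {PXY : 'M[R]_(n, m)}.
Hypothesis margY_gt0 : forall j, 0 < margY PXY j 0.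

Lemma sum_col_neq0 j : \sum_i PXY i j != 0.
Proof. by have := margY_gt0 j; rewrite mxE => /lt0r_neq0. Qed.

Lemma condXY_sum_col j : \sum_i condXY PXY i j = 1.
Proof.
by under eq_bigr do rewrite mxE; rewrite -mulr_suml mxE mulfV ?sum_col_neq0.
Qed.

Lemma condXY_mul_margY : condXY PXY *m margY PXY = margX PXY.
Proof.
apply/matrixP => i j; rewrite !mxE; apply: eq_bigr => l _.
by rewrite !mxE divfK ?sum_col_neq0.
Qed.

End Marginals.

Lemma condXU_mulmx (R : realFieldType) n m (T : finType) (PXgY : 'M[R]_(n, m))
    (PYU : 'I_m -> T -> R) (u : T) :
  condXU PXgY PYU u = PXgY *m condYU PYU u.
Proof.
apply/matrixP => i j; rewrite !mxE (ord1 j) mulr_suml.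
by apply: eq_bigr => l _; rewrite /PXYU !mxE mulrA.
Qed.

Lemma in_Su_condXY_mul {R : realFieldType} {n k : nat}
    {PXY : 'M[R]_(n, n + k)} {U0 : 'M[R]_n} {S : 'M[R]_(n, n + k)}
    {V : 'M[R]_(n + k)} {eps : R} {J : 'cV[R]_n} {y : 'cV[R]_(n + k)} :
  (forall j, 0 < margY PXY j 0) -> lsubmx (condXY PXY) \in unitmx ->
  is_svd (condXY PXY) U0 S V ->
  in_Su (Mof V) (lsubmx (condXY PXY)) (margY PXY) eps J y ->
  condXY PXY *m y = margX PXY + eps *: J.
Proof.
move=> margY_gt0 P1_unit svdP [My _].
rewrite (is_svd_mulmx_eq svdP y
  (margY PXY + eps *: col_mx (invmx (lsubmx (condXY PXY)) *m J) 0)).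
  by rewrite mulmxDr -scalemxAr condXY_mul_margY // mul_lsub_col_invmx.
by rewrite My mulmxDr -scalemxAr.
Qed.

Theorem lemma3 (R : realFieldType) (n k : nat) (PXY : 'M[R]_(n, n + k))
    (U0 : 'M[R]_n) (S : 'M[R]_(n, n + k)) (V : 'M[R]_(n + k)) :
  (0 < k)%N ->
  is_pmf_mx PXY ->
  (forall j, 0 < margY PXY j 0) ->
  (forall i, 0 < margX PXY i 0) ->
  \rank (condXY PXY) = n ->
  lsubmx (condXY PXY) \in unitmx ->
  is_svd (condXY PXY) U0 S V ->
  (* (i) *)
  (forall (eps : R) (J : 'cV[R]_n), 0 < eps ->
     \sum_i J i 0 = 0 -> \sum_i `|J i 0| <= 1 ->
     forall y : 'cV[R]_(n + k),
       in_Su (Mof V) (lsubmx (condXY PXY)) (margY PXY) eps J y ->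
       is_prob_vec y)
  /\
  (* (ii) *)
  (forall (T : finType) (PYU : 'I_(n + k) -> T -> R) (J : T -> 'cV[R]_n) (eps : R),
     0 < eps ->
     (forall y u, 0 <= PYU y u) ->
     \sum_y \sum_u PYU y u = 1 ->
     (forall y, \sum_u PYU y u = margY PXY y 0) ->
     (forall u, 0 < PU PYU u) ->
     (forall u, \sum_x J u x 0 = 0) ->
     (forall x, \sum_u PU PYU u * J u x 0 = 0) ->
     (forall u, \sum_x `|J u x 0| <= 1) ->
     (forall u, in_Su (Mof V) (lsubmx (condXY PXY)) (margY PXY) eps (J u)
                      (condYU PYU u)) ->
     forall u, condXU (condXY PXY) PYU u - margX PXY = eps *: J u).
Proof.
move=> _ pmfXY margY_gt0 _ _ P1_unit svdP.
split=> [eps J _ sumJ0 _ y y_Su | T PYU J eps _ _ _ _ _ _ _ _ condYU_Su u].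
  split; first by case: y_Su.
  rewrite -(sum_mulmx_col y (condXY_sum_col margY_gt0)).
  rewrite (in_Su_condXY_mul margY_gt0 P1_unit svdP y_Su).
  under eq_bigr do rewrite !mxE.
  rewrite big_split /= -mulr_sumr sumJ0 mulr0 addr0.
  by case: pmfXY.
(* (ii) uses only P_{Y|U=u} in S_u, not (P1)-(P3) or the law of (U, Y). *)
rewrite condXU_mulmx (in_Su_condXY_mul margY_gt0 P1_unit svdP (condYU_Su u)).
by rewrite addrAC subrr add0r.
Qed.
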